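(* $\delta(2)\le 5$; that is, $2\in E_5$: every multiset of five decimal digits can be condensed into $2$.
   Context: For a finite nonempty multiset $S$ of real numbers, $V(S)$ is the smallest set of real numbers such that: (1) if $|S|=1$ then $S\subseteq V(S)$; (2) if $|S|\ge 2$, then for all nonempty multisets $A,B$ with $A+B=S$ (multiplicities add) and all $a\in V(A)$, $b\in V(B)$, each of $a+b,\ a-b,\ b-a,\ ab,\ a/b,\ b/a,\ a^b,\ b^a$ lies in $V(S)$ whenever it is a well-defined real number; (3) if $a\in V(S)$ is a nonnegative integer then $a!\in V(S)$ (with $0!=1$). Let $D=\{0,\dots,9\}$; for $k\ge1$, $E_k$ is the intersection of $V(S)$ over all multisets $S$ of size $k$ with all elements in $D$. For a number $n$, $\delta(n)=\min\{k\ge1: n\in E_k\}$. *)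

From Stdlib Require Import Reals List Permutation ZArith Arith.
Import ListNotations.
Open Scope R_scope.

(* [pow_val x y z] : the real power x^y is a well-defined real number and equals z. *)
Definition pow_val (x y z : R) : Prop :=
  (0 < x /\ z = Rpower x y) \/
  (x = 0 /\ 0 < y /\ z = 0) \/
  (x < 0 /\ exists k : Z, y = IZR k /\ z = powerRZ x k).

Definition combine (a b c : R) : Prop :=
  c = a + b \/ c = a - b \/ c = b - a \/ c = a * b \/
  (b <> 0 /\ c = a / b) \/ (a <> 0 /\ c = b / a) \/
  pow_val a b c \/ pow_val b a c.

(* Multisets of reals are represented by lists, up to permutation.
   [V S x] means x ∈ V(S); V is the least such predicate. *)
Inductive V : list R -> R -> Prop :=
| V_single : forall x : R, V [x] x
| V_comb : forall (S A B : list R) (a b c : R),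
    A <> [] -> B <> [] -> Permutation (A ++ B) S ->
    V A a -> V B b -> combine a b c -> V S c
| V_fact : forall (S : list R) (n : nat),
    V S (INR n) -> V S (INR (fact n)).

Definition E (k : nat) (x : R) : Prop :=
  forall l : list nat, length l = k -> Forall (fun d => (d <= 9)%nat) l ->
    V (map INR l) x.

(* Among five digits one always finds a "core" of one or two digits that
   condenses to 1 or 2 (a digit 0, 1 or 2, two equal or consecutive digits,
   or two digits with difference 2 or ratio 2), and among the remaining
   digits another such core condensing to 1.  Since 1^r = 1, any leftover
   digits can be absorbed into that 1, and then 2 = 1 + 1 or 2 = 2 * 1.
   Whether such a decomposition exists is decided by a boolean check, which
   is run on all 10^5 digit lists. *)

From Pilot Require Import Defs.
From Stdlib Require Import Reals List Permutation ZArith Arith Lra Lia Bool.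
Import ListNotations.
Open Scope R_scope.

Lemma combine_add a b : Defs.combine a b (a + b).
Proof. left; reflexivity. Qed.

Lemma combine_sub a b : Defs.combine a b (a - b).
Proof. right; left; reflexivity. Qed.

Lemma combine_rsub a b : Defs.combine a b (b - a).
Proof. do 2 right; left; reflexivity. Qed.

Lemma combine_mul a b : Defs.combine a b (a * b).
Proof. do 3 right; left; reflexivity. Qed.

Lemma combine_div a b : b <> 0 -> Defs.combine a b (a / b).
Proof. intros Hb; do 4 right; left; split; [exact Hb | reflexivity]. Qed.

Lemma combine_rdiv a b : a <> 0 -> Defs.combine a b (b / a).
Proof. intros Ha; do 5 right; left; split; [exact Ha | reflexivity]. Qed.

Lemma combine_one_pow b : Defs.combine 1 b 1.
Proof.
  do 6 right; left; left; split; [lra |].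
  unfold Rpower; rewrite ln_1, Rmult_0_r, exp_0; reflexivity.
Qed.

Lemma V_nonempty S x : V S x -> S <> [].
Proof.
  induction 1 as [| S A B a b c HA _ HAB | ]; try congruence.
  intros ->; apply Permutation_sym, Permutation_nil in HAB.
  destruct A; [contradiction | discriminate].
Qed.

Lemma V_perm S S' x : Permutation S S' -> V S x -> V S' x.
Proof.
  intros HSS' HV; revert S' HSS'.
  induction HV as [y | S A B a b c HA HB HAB HVa _ HVb _ Hc | S n _ IH];
    intros S' HSS'.
  - apply Permutation_length_1_inv in HSS' as ->; apply V_single.
  - apply (V_comb S' A B a b c); eauto using perm_trans.
  - apply V_fact, IH, HSS'.
Qed.

Lemma V_app A B a b c : V A a -> V B b -> Defs.combine a b c -> V (A ++ B) c.
Proof.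
  intros HA HB Hc.
  apply (V_comb _ A B a b c); eauto using V_nonempty, Permutation_refl.
Qed.

Lemma V_pair x y c : Defs.combine x y c -> V [x; y] c.
Proof. apply (V_app [x] [y]); apply V_single. Qed.

Lemma V_inhabited S : S <> [] -> exists x, V S x.
Proof.
  induction S as [| a [| b S] IH]; intros HS; [congruence | |].
  - exists a; apply V_single.
  - destruct IH as [r Hr]; [discriminate |].
    exists (a + r); apply (V_app [a] (b :: S) a r); auto using V_single, combine_add.
Qed.

Lemma V_one_app A B : V A 1 -> V (A ++ B) 1.
Proof.
  intros HA; destruct B as [| b B].
  - rewrite app_nil_r; exact HA.
  - destruct (V_inhabited (b :: B)) as [r Hr]; [discriminate |].
    exact (V_app _ _ _ _ _ HA Hr (combine_one_pow r)).
Qed.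

Lemma V_zero_one : V [0] 1.
Proof. change 1 with (INR (fact 0)); apply V_fact, V_single. Qed.

Definition core1 (g : list nat) : bool :=
  match g with
  | [x] => x <=? 1
  | [x; y] => (x =? y) || (y =? S x) || (x =? S y)
  | _ => false
  end.

Definition core2 (g : list nat) : bool :=
  match g with
  | [x] => x =? 2
  | [x; y] => (y =? x + 2) || (x =? y + 2)
              || ((0 <? x) && (y =? 2 * x)) || ((0 <? y) && (x =? 2 * y))
  | _ => false
  end.

Lemma core1_sound g : core1 g = true -> V (map INR g) 1.
Proof.
  destruct g as [| x [| y [| z g]]]; simpl; try discriminate.
  - intros Hx%Nat.leb_le.
    destruct x as [| [| x]]; [exact V_zero_one | apply V_single | lia].
  - rewrite !orb_true_iff, !Nat.eqb_eq.
    intros [[-> | ->] | ->].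
    + change 1 with (INR (fact 0)); apply V_fact.
      replace (INR 0) with (INR y - INR y) by (simpl; ring).
      apply V_pair, combine_sub.
    + replace 1 with (INR (S x) - INR x) by (rewrite S_INR; ring).
      apply V_pair, combine_rsub.
    + replace 1 with (INR (S y) - INR y) by (rewrite S_INR; ring).
      apply V_pair, combine_sub.
Qed.

Lemma core2_sound g : core2 g = true -> V (map INR g) 2.
Proof.
  destruct g as [| x [| y [| z g]]]; simpl; try discriminate.
  - intros ->%Nat.eqb_eq; change 2 with (INR 2); apply V_single.
  - rewrite !orb_true_iff, !andb_true_iff, !Nat.eqb_eq, !Nat.ltb_lt.
    intros [[[-> | ->] | [Hx ->]] | [Hy ->]].
    + replace 2 with (INR (x + 2) - INR x) by (rewrite plus_INR; simpl; ring).
      apply V_pair, combine_rsub.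
    + replace 2 with (INR (y + 2) - INR y) by (rewrite plus_INR; simpl; ring).
      apply V_pair, combine_sub.
    + assert (Hx0 : INR x <> 0) by (apply not_0_INR; lia).
      replace 2 with (INR (2 * x) / INR x)
        by (rewrite mult_INR; simpl; field; exact Hx0).
      apply V_pair, combine_rdiv, Hx0.
    + assert (Hy0 : INR y <> 0) by (apply not_0_INR; lia).
      replace 2 with (INR (2 * y) / INR y)
        by (rewrite mult_INR; simpl; field; exact Hy0).
      apply V_pair, combine_div, Hy0.
Qed.

Fixpoint splits {T : Type} (l : list T) : list (list T * list T) :=
  match l with
  | [] => [([], [])]
  | x :: r => flat_map (fun p => [(x :: fst p, snd p); (fst p, x :: snd p)])
                       (splits r)
  end.

Lemma splits_perm {T : Type} (l g r : list T) :
  In (g, r) (splits l) -> Permutation l (g ++ r).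
Proof.
  revert g r; induction l as [| x l IH]; simpl; intros g r Hin.
  - destruct Hin as [[= <- <-] | []]; constructor.
  - apply in_flat_map in Hin as [[g' r'] [Hin' Hgr]]; simpl in Hgr.
    specialize (IH g' r' Hin').
    destruct Hgr as [[= <- <-] | [[= <- <-] | []]]; simpl.
    + apply perm_skip, IH.
    + apply Permutation_cons_app, IH.
Qed.

Lemma V_split_perm l g r x :
  In (g, r) (splits l) -> V (map INR g ++ map INR r) x -> V (map INR l) x.
Proof.
  intros Hin; apply V_perm; rewrite <- map_app.
  apply Permutation_sym, Permutation_map, splits_perm, Hin.
Qed.

Definition condenses1 (l : list nat) : bool :=
  existsb (fun p => core1 (fst p)) (splits l).

Definition condenses2 (l : list nat) : bool :=
  existsb (fun p => (core1 (fst p) || core2 (fst p)) && condenses1 (snd p))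
          (splits l).

Lemma condenses1_sound l : condenses1 l = true -> V (map INR l) 1.
Proof.
  intros [[g r] [Hin Hg]]%existsb_exists.
  apply (V_split_perm l g r _ Hin), V_one_app, core1_sound, Hg.
Qed.

Lemma condenses2_sound l : condenses2 l = true -> V (map INR l) 2.
Proof.
  intros [[g r] [Hin Hgr]]%existsb_exists; simpl in Hgr.
  apply andb_true_iff in Hgr as [Hg Hr%condenses1_sound].
  apply (V_split_perm l g r _ Hin).
  apply orb_true_iff in Hg as [Hg%core1_sound | Hg%core2_sound].
  - replace 2 with (1 + 1) by ring; exact (V_app _ _ _ _ _ Hg Hr (combine_add 1 1)).
  - rewrite <- (Rmult_1_r 2); exact (V_app _ _ _ _ _ Hg Hr (combine_mul 2 1)).
Qed.

Fixpoint digit_lists (n : nat) : list (list nat) :=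
  match n with
  | O => [[]]
  | S n' => flat_map (fun d => map (cons d) (digit_lists n')) (seq 0 10)
  end.

Lemma in_digit_lists l :
  Forall (fun d => (d <= 9)%nat) l -> In l (digit_lists (length l)).
Proof.
  induction 1 as [| d l Hd _ IH]; [now left |].
  apply in_flat_map; exists d; split.
  - apply in_seq; lia.
  - apply in_map, IH.
Qed.

Lemma condenses2_digit_lists5 : forallb condenses2 (digit_lists 5) = true.
Proof. vm_compute; reflexivity. Qed.

Theorem lemma5p3 : E 5 2.
Proof.
  intros l Hlen Hdigits.
  apply condenses2_sound.
  apply (proj1 (forallb_forall _ _) condenses2_digit_lists5).
  rewrite <- Hlen; apply in_digit_lists, Hdigits.
Qed.
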